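(* Let $x\in\operatorname{dom}f$ and assume (SH). If moreover the map $t\mapsto f_t(x)$ is lower semicontinuous on $T$, then $\inf_{t\in T}f_t(x)>-\infty$, and consequently for every $\varepsilon>0$, \[ \mathrm{N}_{\operatorname{dom}f}(x)=\Big[\overline{\operatorname{co}}\Big(\bigcup_{t\in T}\partial_\varepsilon f_t(x)\Big)\Big]_\infty . \]
   Context: $X$ is a real separated locally convex space with dual $X^*$ carrying the weak$^*$ topology. $T$ is a nonempty index set, $\{f_t: t\in T\}$ are proper convex lsc functions $X\to\mathbb{R}\cup\{+\infty\}$, $f:=\sup_{t\in T}f_t$. $\partial_\varepsilon g(x)$ is the $\varepsilon$-subdifferential; $\overline{\operatorname{co}}$ is the weak$^*$-closed convex hull; $C_\infty$ is the recession cone of a nonempty closed convex set $C$; $\mathrm{N}_A(x)$ is the normal cone. (SH): $T$ is compact Hausdorff and $t\mapsto f_t(z)$ is upper semicontinuous on $T$ for each $z\in X$. *)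

From HB Require Import structures.
From mathcomp Require Import all_boot all_order all_algebra.
From mathcomp Require Import all_classical all_reals all_analysis.
Set Implicit Arguments. Unset Strict Implicit. Unset Printing Implicit Defensive.
Import Order.TTheory GRing.Theory Num.Theory.
Import numFieldTopology.Exports numFieldNormedType.Exports.
Local Open Scope classical_set_scope.
Local Open Scope ring_scope.

Section Defs.
Context {R : realType} {X : tvsType R}.

Definition is_dual (u : X -> R) : Prop :=
  (forall (a : R) (x y : X), u (a *: x + y) = a * u x + u y) /\ continuous u.

(* weak^* topology on X^* = subspace topology induced by pointwise convergence *)
Definition wstar_closed (C : set (X -> R)) : Prop :=
  C `<=` is_dual /\ (closure (C : set {ptws X -> R})) `&` is_dual `<=` C.

Definition convex_fset (C : set (X -> R)) : Prop :=
  forall u v (l : R), C u -> C v -> 0 <= l <= 1 ->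
    C (fun z => l * u z + (1 - l) * v z).

Definition wstar_clco (A : set (X -> R)) : set (X -> R) :=
  \bigcap_(C in [set C | A `<=` C /\ convex_fset C /\ wstar_closed C]) C.

Definition rec_cone (C : set (X -> R)) : set (X -> R) :=
  [set u | is_dual u /\ forall c (l : R), C c -> 0 <= l ->
      C (fun z => c z + l * u z)].

Definition normal_cone (A : set X) (x : X) : set (X -> R) :=
  [set u | is_dual u /\ forall y, A y -> u (y - x) <= 0].

Local Open Scope ereal_scope.

Definition edom (g : X -> \bar R) : set X := [set z | g z < +oo].

Definition proper_fun (g : X -> \bar R) : Prop :=
  (forall z, g z != -oo) /\ exists z, g z < +oo.

Definition convex_fun (g : X -> \bar R) : Prop :=
  forall (x y : X) (l : R), (0 < l < 1)%R ->
    g (l *: x + (1 - l) *: y)%R <= l%:E * g x + (1 - l)%:E * g y.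

(* epsilon-subdifferential (empty when g x is not finite) *)
Definition eps_subdiff (eps : R) (g : X -> \bar R) (x : X) : set (X -> R) :=
  [set u | is_dual u /\ g x \is a fin_num /\
     forall y, g x + (u (y - x))%:E - eps%:E <= g y].

End Defs.

Section USC.
Context {T : topologicalType} {R : numFieldType}.
Local Open Scope ereal_scope.
Definition upper_semicontinuous (f : T -> \bar R) := forall x a, f x < a%:E ->
  exists2 V, nbhs x V & forall y, V y -> f y < a%:E.
End USC.

From HB Require Import structures.
From mathcomp Require Import all_boot all_order all_algebra.
From mathcomp Require Import all_classical all_reals all_analysis.
From mathcomp Require Import ring lra.
Set Implicit Arguments. Unset Strict Implicit. Unset Printing Implicit Defensive.
Import Order.TTheory GRing.Theory Num.Theory.
Import numFieldTopology.Exports numFieldNormedType.Exports.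
Local Open Scope classical_set_scope.
Local Open Scope ring_scope.

(* The infimum is finite since a lsc function on a compact
      space is bounded below.  Every element c of the hull satisfies
      c (y - x) <= f y - inf_t f_t x + eps, so its recession directions are
      normal to dom f.  Conversely, if c + l u leaves a weak^*-closed convex
      set containing the eps-subgradients, separation gives h with u h > 0
      at which these subgradients are bounded; segment minorants and the
      compactness of T then put x + sg h in dom f for some sg > 0, which
      contradicts the normality of u. *)

Definition linear_map (R : realType) (V : lmodType R) (phi : V -> R) :=
  forall a x y, phi (a *: x + y) = a * phi x + phi y.

Section LinearMap.
Variables (R : realType) (V : lmodType R) (phi : V -> R).
Hypothesis phi_lin : linear_map phi.

Lemma linear_map0 : phi 0 = 0.
Proof. by have := phi_lin 1 0 0; rewrite scale1r addr0 mul1r; lra. Qed.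

Lemma linear_mapD x y : phi (x + y) = phi x + phi y.
Proof. by rewrite -[x]scale1r phi_lin mul1r scale1r. Qed.

Lemma linear_mapZ a x : phi (a *: x) = a * phi x.
Proof. by rewrite -[a *: x]addr0 phi_lin linear_map0 addr0. Qed.

Lemma linear_mapN x : phi (- x) = - phi x.
Proof. by rewrite -scaleN1r linear_mapZ mulN1r. Qed.

Lemma linear_mapB x y : phi (x - y) = phi x - phi y.
Proof. by rewrite linear_mapD linear_mapN. Qed.

End LinearMap.

Definition cvx (R : realType) (V : lmodType R) (A : set V) :=
  forall a b (l : R), A a -> A b -> 0 <= l <= 1 -> A (l *: a + (1 - l) *: b).

(* The functional
   is obtained by Zorn's lemma as a maximal p-dominated linear graph. *)
Section HahnBanach.
Variables (R : realType) (V : lmodType R) (p : V -> R).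
Hypotheses (p_ge0 : forall y, 0 <= p y)
  (p_sub : forall y1 y2, p (y1 + y2) <= p y1 + p y2)
  (p_hom : forall (a : R) y, 0 < a -> p (a *: y) = a * p y).
Variable z : V.
Hypothesis pz : 1 <= p z.

(* [G] is the graph of a linear functional defined on a subspace, dominated
   by [p] and sending [z] to 1. *)
Definition dom_graph (G : set (V * R)) :=
  [/\ (forall y r r', G (y, r) -> G (y, r') -> r = r'),
      (forall a y1 r1 y2 r2, G (y1, r1) -> G (y2, r2) ->
          G (a *: y1 + y2, a * r1 + r2)),
      (forall y r, G (y, r) -> r <= p y) &
      G (z, 1)].

Lemma dom_graph0 G : dom_graph G -> G (0, 0).
Proof.
case=> _ lin _ Gz; have := lin (-1) _ _ _ _ Gz Gz.
by rewrite scaleN1r addNr mulN1r addNr.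
Qed.

Lemma dom_graphZ G a y r : dom_graph G -> G (y, r) -> G (a *: y, a * r).
Proof.
move=> gG Gyr; case: (gG) => _ lin _ _.
by have := lin a _ _ _ _ Gyr (dom_graph0 gG); rewrite !addr0.
Qed.

Lemma dom_graphD G y1 r1 y2 r2 : dom_graph G -> G (y1, r1) -> G (y2, r2) ->
  G (y1 + y2, r1 + r2).
Proof.
by move=> [_ lin _ _] h1 h2; have := lin 1 _ _ _ _ h1 h2; rewrite scale1r mul1r.
Qed.

Lemma sublinear0 : p 0 = 0.
Proof.
have := p_hom 0 (ltr0Sn _ 1); rewrite scaler0 => h.
have : p 0 * (1 - 2) = 0 by rewrite mulrBr mulr1 mulrC -h subrr.
move/eqP; rewrite mulf_eq0 => /orP[/eqP//|].
by rewrite (_ : 1 - 2 = -1 :> R) ?oppr_eq0 ?oner_eq0 //; lra.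
Qed.

(* Zorn's lemma needs the property to be stable under unions of chains,
   including the empty one. *)
Definition dom_graph_or_empty (G : set (V * R)) := G = set0 \/ dom_graph G.

Lemma dom_graph_chain (F : set (set (V * R))) : F `<=` dom_graph_or_empty ->
  total_on F subset -> dom_graph_or_empty (\bigcup_(G in F) G).
Proof.
move=> FP tot.
have [[G FG [q0 Gq]]|none] := pselect (exists2 G, F G & G !=set0); last first.
  left; apply/seteqP; split => // q [G FG Gq]; apply: none; exists G => //.
  by exists q.
have goodF H : F H -> H !=set0 -> dom_graph H.
  by move=> FH [q Hq]; case: (FP H FH) => // H0; move: Hq; rewrite H0.
have common q1 q2 : (\bigcup_(G in F) G) q1 -> (\bigcup_(G in F) G) q2 ->
    exists2 H, F H /\ dom_graph H & H q1 /\ H q2.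
  move=> [H1 FH1 H1q] [H2 FH2 H2q]; have [s12|s21] := tot _ _ FH1 FH2.
    exists H2; last by split => //; exact: s12.
    by split => //; apply: goodF => //; exists q2.
  exists H1; last by split => //; exact: s21.
  by split => //; apply: goodF => //; exists q1.
right; split.
- move=> y r r' h1 h2; have [H [_ [func _ _ _]] [a b]] := common _ _ h1 h2.
  exact: func a b.
- move=> a y1 r1 y2 r2 h1 h2.
  have [H [FH [_ lin _ _]] [a1 b1]] := common _ _ h1 h2.
  by exists H => //; exact: lin.
- move=> y r [H FH Hq].
  by have [_ _ dom _] := goodF H FH (ex_intro _ _ Hq); exact: dom.
- by exists G => //; have [_ _ _] := goodF G FG (ex_intro _ _ Gq).
Qed.

Lemma line_dom_graph : dom_graph [set q | exists a : R, q = (a *: z, a)].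
Proof.
have z_neq0 : z != 0 by apply/eqP => z0; move: pz; rewrite z0 sublinear0; lra.
split.
- move=> y r r' [a [-> ->]] [a' [e ->]].
  apply/eqP; rewrite -subr_eq0; apply/eqP.
  have : (a - a') *: z = 0 by rewrite scalerBl e subrr.
  by move/eqP; rewrite scaler_eq0 (negbTE z_neq0) orbF => /eqP.
- move=> a y1 r1 y2 r2 [b [-> ->]] [c [-> ->]]; exists (a * b + c).
  by rewrite scalerDl scalerA.
- move=> y r [a [-> ->]]; have [a0|a0] := leP a 0.
    exact: le_trans a0 (p_ge0 _).
  by rewrite p_hom // -{1}(mulr1 a) ler_pM2l.
- by exists 1; rewrite scale1r.
Qed.

Lemma extension_value G y0 : dom_graph G -> exists c : R, forall v r, G (v, r) ->
  r - p (v - y0) <= c /\ c <= p (v + y0) - r.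
Proof.
move=> gG; have [_ _ dom _] := gG.
pose L := [set q | exists v r, G (v, r) /\ q = r - p (v - y0)].
have key v1 r1 v2 r2 : G (v1, r1) -> G (v2, r2) ->
    r1 - p (v1 - y0) <= p (v2 + y0) - r2.
  move=> h1 h2; have := dom _ _ (dom_graphD gG h1 h2).
  have := p_sub (v1 - y0) (v2 + y0).
  rewrite (_ : v1 - y0 + (v2 + y0) = v1 + v2); last by rewrite addrCA subrK addrC.
  lra.
have L0 : L !=set0.
  by exists (0 - p (0 - y0)); exists 0, 0; split => //; exact: dom_graph0.
have Lub : ubound L (p (0 + y0) - 0).
  by move=> _ [v [r [h ->]]]; exact: key h (dom_graph0 gG).
exists (sup L) => v r h; split.
  by apply: ub_le_sup; [exists (p (0 + y0) - 0)|exists v, r].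
by apply: ge_sup => // _ [v1 [r1 [h1 ->]]]; exact: key h1 h.
Qed.

Lemma dom_graph_extend G y0 : dom_graph G -> ~ (exists r, G (y0, r)) ->
  exists2 G', dom_graph G' & G `<` G'.
Proof.
move=> gG ny0; have [func lin dom Gz] := gG.
have [c Hc] := extension_value y0 gG.
pose G' := [set q | exists v r (a : R), G (v, r) /\ q = (v + a *: y0, r + a * c)].
have GG' : G `<=` G'.
  by move=> [v r] h; exists v, r, 0; rewrite scale0r mul0r !addr0.
exists G'; last first.
  split => // G'G; apply: ny0; exists c; apply: G'G.
  by exists 0, 0, 1; split; [exact: dom_graph0|rewrite scale1r mul1r !add0r].
split => //; last exact: GG'.
- move=> y r r' [v [r1 [a [h1 [e1 e2]]]]] [v' [r1' [a' [h1' [e1' e2']]]]].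
  have aa : a = a'.
    apply: contrapT => /eqP; rewrite -subr_eq0 => ne.
    apply: ny0; exists ((a - a')^-1 * (r1' - r1)).
    have e : (a - a') *: y0 = v' - v.
      have e : v + a *: y0 = v' + a' *: y0 by rewrite -e1 -e1'.
      by apply: (addrI v); rewrite scalerBl addrA e addrK addrC subrK.
    have -> : y0 = (a - a')^-1 *: (v' - v) by rewrite -e scalerA mulVf // scale1r.
    apply: (dom_graphZ _ gG); apply: (dom_graphD gG h1').
    by rewrite -scaleN1r -[- r1]mulN1r; exact: (dom_graphZ _ gG h1).
  subst a'; have vv : v = v' by apply: (addIr (a *: y0)); rewrite -e1 -e1'.
  by subst v'; rewrite e2 e2' (func _ _ _ h1 h1').
- move=> al y1 q1 y2 q2 [v1 [r1 [a1 [h1 [-> ->]]]]] [v2 [r2 [a2 [h2 [-> ->]]]]].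
  exists (al *: v1 + v2), (al * r1 + r2), (al * a1 + a2); split; first exact: lin.
  congr (_, _); last by ring.
  by rewrite scalerDr scalerDl scalerA !addrA; congr (_ + _); rewrite addrAC.
- move=> y r [v [r1 [a [h1 [-> ->]]]]].
  have [a0|a0|->] := ltgtP a 0; last by rewrite scale0r mul0r !addr0; exact: dom.
  + have b0 : 0 < - a by rewrite oppr_gt0.
    have := (Hc _ _ (dom_graphZ (- a)^-1 gG h1)).1.
    rewrite -(ler_pM2l b0) mulrBr mulrA mulfV ?gt_eqF // mul1r.
    rewrite -p_hom // scalerBr scalerA mulfV ?gt_eqF // scale1r.
    rewrite scaleNr opprK mulNr; lra.
  + have := (Hc _ _ (dom_graphZ a^-1 gG h1)).2.
    rewrite -(ler_pM2l a0) mulrBr mulrA mulfV ?gt_eqF // mul1r.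
    rewrite -p_hom // scalerDr scalerA mulfV ?gt_eqF // scale1r; lra.
Qed.

Lemma hahn_banach_line : exists phi : V -> R,
  [/\ linear_map phi, forall y, phi y <= p y & phi z = 1].
Proof.
have [A [PA Amax]] := Zorn_bigcup dom_graph_chain.
have gA : dom_graph A.
  case: PA => // A0; exfalso; apply: (Amax _); last by right; exact: line_dom_graph.
  by rewrite A0; split => // /(_ (z, 1)); apply; exists 1; rewrite scale1r.
have [func lin dom Az] := gA.
have total y : exists r, A (y, r).
  apply: contrapT => ny; have [G' gG' AG'] := dom_graph_extend gA ny.
  by apply: Amax AG' _; right.
pose phi y := projT1 (cid (total y)).
have phiP y : A (y, phi y) by rewrite /phi; case: cid.
exists phi; split.
- by move=> a x y; apply: (func (a *: x + y)); [exact: phiP|exact: lin].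
- by move=> y; exact: dom (phiP y).
- exact: func (phiP z) Az.
Qed.

End HahnBanach.

(* The gauge of [C] is
   sublinear with [1 <= p zz], so [hahn_banach_line] applies. *)
Section Gauge.
Variables (R : realType) (V : lmodType R) (C : set V) (zz : V).
Hypotheses (convC : cvx C) (absC : forall y, exists2 k : R, 0 < k & C (k *: y))
  (nCzz : ~ C zz).

Let S y := [set l : R | 0 < l /\ C (l^-1 *: y)].
Let p y := inf (S y).

Let C0 : C 0.
Proof. by have [k _] := absC 0; rewrite scaler0. Qed.

Let star c (mu : R) : C c -> 0 <= mu <= 1 -> C (mu *: c).
Proof. by move=> Cc mu01; have := convC Cc C0 mu01; rewrite scaler0 addr0. Qed.

Let Sne y : S y !=set0.
Proof.
have [k k0 Ck] := absC y; exists k^-1; split; first by rewrite invr_gt0.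
by rewrite invrK.
Qed.

Let Slb y : has_lbound (S y).
Proof. by exists 0 => l [/ltW]. Qed.

Let p_ge0 y : 0 <= p y.
Proof. by apply: lb_le_inf => // l [/ltW]. Qed.

Let p_le y l : S y l -> p y <= l.
Proof. by move=> Sl; exact: ge_inf (Slb y) _ Sl. Qed.

(* [S y] is upward closed since [C] is star-shaped around 0. *)
Let Sup y l l' : S y l -> l <= l' -> S y l'.
Proof.
move=> [l0 Cl] ll'; have l'0 : 0 < l' by exact: lt_le_trans ll'.
split => //; have -> : l'^-1 *: y = (l / l') *: (l^-1 *: y).
  by rewrite scalerA mulrAC mulfV ?gt_eqF // mul1r.
apply: star => //; rewrite divr_ge0 ?(ltW l0) ?(ltW l'0) //=.
by rewrite ler_pdivrMr // mul1r.
Qed.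

Let Seps y eta : 0 < eta -> S y (p y + eta).
Proof.
move=> e0; have : p y < p y + eta by rewrite ltrDl.
by move=> /(inf_lt (Sne y)) [l Sl lt]; apply: Sup Sl (ltW lt).
Qed.

Let p_sub y1 y2 : p (y1 + y2) <= p y1 + p y2.
Proof.
apply/ler_addgt0Pr => e e0.
have e20 : 0 < e / 2 by rewrite divr_gt0.
have [l10 C1] := Seps y1 e20; have [l20 C2] := Seps y2 e20.
set l1 := p y1 + e / 2 in l10 C1 *; set l2 := p y2 + e / 2 in l20 C2 *.
have -> : p y1 + p y2 + e = l1 + l2 by rewrite /l1 /l2; field.
apply: p_le; split; first exact: addr_gt0.
have l120 : 0 < l1 + l2 by exact: addr_gt0.
have -> : (l1 + l2)^-1 *: (y1 + y2) =
    (l1 / (l1 + l2)) *: (l1^-1 *: y1) + (1 - l1 / (l1 + l2)) *: (l2^-1 *: y2).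
  rewrite !scalerA scalerDr; congr (_ + _); congr (_ *: _).
    by field; rewrite ?gt_eqF.
  by field; rewrite ?gt_eqF.
apply: convC => //; rewrite divr_ge0 ?(ltW l10) ?(ltW l120) //=.
by rewrite ler_pdivrMr // mul1r lerDl ltW.
Qed.

Let p_homle (a : R) y : 0 < a -> p (a *: y) <= a * p y.
Proof.
move=> a0; apply/ler_addgt0Pr => e e0.
have ea : 0 < e / a by rewrite divr_gt0.
have [l0 Cl] := Seps y ea.
have -> : a * p y + e = a * (p y + e / a) by field; rewrite gt_eqF.
apply: p_le; split; first exact: mulr_gt0.
by rewrite scalerA invfM mulrAC mulVf ?gt_eqF // mul1r.
Qed.

Let p_hom (a : R) y : 0 < a -> p (a *: y) = a * p y.
Proof.
move=> a0; have ai0 : 0 < a^-1 by rewrite invr_gt0.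
apply/eqP; rewrite eq_le p_homle //=.
have := @p_homle a^-1 (a *: y) ai0.
rewrite scalerA mulVf ?gt_eqF // scale1r => h.
by rewrite -(ler_pM2l ai0) mulrA mulVf ?gt_eqF // mul1r.
Qed.

Let pzz : 1 <= p zz.
Proof.
rewrite leNgt; apply/negP => lt1; have [l Sl ll] := inf_lt (Sne zz) lt1.
by have [_] := Sup Sl (ltW ll); rewrite invr1 scale1r.
Qed.

Lemma gauge_separation : exists phi : V -> R,
  [/\ linear_map phi, phi zz = 1 & forall c, C c -> phi c <= 1].
Proof.
have [phi [lin le e]] := hahn_banach_line p_ge0 p_sub p_hom pzz.
exists phi; split => // c Cc; apply: le_trans (le c) _.
by apply: p_le; split; rewrite ?ltr01 // invr1 scale1r.
Qed.

End Gauge.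

Lemma le_sum_seq (R : numDomainType) (I : eqType) (s : seq I) (F : I -> R) i :
  (forall j, 0 <= F j) -> i \in s -> F i <= \sum_(j <- s) F j.
Proof.
move=> F0; elim: s => [|a s IH] //; rewrite inE big_cons => /orP[/eqP ->|i_s].
  by rewrite lerDl sumr_ge0.
by apply: le_trans (IH i_s) _; rewrite lerDr.
Qed.

(* Separation in X^* for the weak^* topology, whose separating functionals
   are evaluations at points of X. *)
Section WeakStarSeparation.
Context (R : realType) (X : tvsType R).

(* The indicator of a point, used to peel off one evaluation at a time. *)
Let ind (x : X) : X -> R := fun y => if y == x then 1 else 0.

Lemma finite_support_eval (xs : seq X) (phi : (X -> R) -> R) : linear_map phi ->
  (forall v : X -> R, (forall x, x \in xs -> v x = 0) -> phi v = 0) ->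
  exists h, forall u, is_dual u -> phi u = u h.
Proof.
elim: xs phi => [|x xs IH] phi lphi van.
  by exists 0 => u du; rewrite (linear_map0 du.1) van.
pose phi' v := phi (v - v x *: ind x).
have lphi' : linear_map phi'.
  move=> a v1 v2; rewrite /phi' -lphi; congr phi; apply/funext => y.
  change (a * v1 y + v2 y - (a * v1 x + v2 x) * ind x y =
          a * (v1 y - v1 x * ind x y) + (v2 y - v2 x * ind x y)); ring.
have van' v : (forall y, y \in xs -> v y = 0) -> phi' v = 0.
  move=> vxs; apply: van => y yin; change (v y - v x * ind x y = 0); rewrite /ind.
  move: yin; rewrite inE => /orP[/eqP ->|yxs]; first by rewrite eqxx; ring.
  by case: ifP => [/eqP ->|_]; [ring|rewrite vxs //; ring].
have [h' Hh] := IH _ lphi' van'.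
exists (phi (ind x) *: x + h') => u du.
rewrite (linear_mapD du.1) (linear_mapZ du.1) -Hh // /phi'.
by rewrite (linear_mapB lphi) (linear_mapZ lphi); ring.
Qed.

Lemma pointwise_basic_sep (C : set (X -> R)) (w : X -> R) :
  ~ closure (C : set {ptws X -> R}) w ->
  exists xs : seq X, exists2 d : R, 0 < d &
    forall c, C c -> ~~ all (fun x => `|c x - w x| < d) xs.
Proof.
move=> ncl; apply: contrapT => nex; apply: ncl => B nB.
pose D := [set i : seq X * R | 0 < i.2].
pose Bs (i : seq X * R) := [set v : X -> R | all (fun x => `|v x - w x| < i.2) i.1].
have FF : Filter (filter_from D Bs).
  apply: filter_from_filter; first by exists ([::], 1); rewrite /D /= ltr01.
  move=> [xs d] [ys e] /= d0 e0; exists (xs ++ ys, Num.min d e).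
    by rewrite /D /= lt_min d0 e0.
  move=> v; rewrite /Bs /= all_cat => /andP[a1 a2]; split.
    by apply/allP => y /(allP a1) /lt_le_trans; apply; rewrite ge_min lexx.
  by apply/allP => y /(allP a2) /lt_le_trans; apply; rewrite ge_min lexx orbT.
have cv : {ptws, filter_from D Bs --> w}.
  apply/pointwise_cvgP => t; apply/cvgrPdist_lt => e e0.
  by exists ([:: t], e) => // v; rewrite /Bs /= andbT distrC.
have [[xs d] /= d0 sub] := cv B nB.
have [c [Cc al]] : exists c, C c /\ all (fun x => `|c x - w x| < d) xs.
  apply: contrapT => nc; apply: nex; exists xs, d => // c Cc.
  by apply/negP => al; apply: nc; exists c.
by exists c; split => //; exact: sub.
Qed.

Definition box (xs : seq X) (d : R) := [set e : X -> R | all (fun x => `|e x| < d) xs].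

Lemma box_absorbing xs d : 0 < d ->
  forall y : X -> R, exists2 k : R, 0 < k & box xs d (k *: y).
Proof.
move=> d0 y; pose s := \sum_(x <- xs) `|y x|.
have s10 : 0 < 1 + s by apply: ltr_pwDl => //; exact: sumr_ge0.
exists (d / (1 + s)); first by rewrite divr_gt0.
apply/allP => x xin; change (`|d / (1 + s) * y x| < d).
rewrite normrM ger0_norm ?divr_ge0 ?(ltW d0) ?(ltW s10) //.
rewrite mulrAC ltr_pdivrMr // ltr_pM2l //.
have := @le_sum_seq _ _ xs (fun x => `|y x|) x (fun _ => normr_ge0 _) xin.
by rewrite -/s; lra.
Qed.

Lemma box_cvx xs d : cvx (box xs d).
Proof.
move=> a b l Ea Eb /andP[l0 l1]; apply/allP => x xin.
change (`|l * a x + (1 - l) * b x| < d).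
have /= ha := allP Ea x xin; have /= hb := allP Eb x xin.
apply: le_lt_trans (ler_normD _ _) _.
rewrite !normrM (ger0_norm l0) [`|1 - l|]ger0_norm ?subr_ge0 //.
have [->|lpos] := eqVneq l 0; first by rewrite mul0r add0r subr0 mul1r.
have lp : 0 < l by rewrite lt_neqAle eq_sym lpos.
have : l * `|a x| < l * d by rewrite ltr_pM2l.
have : (1 - l) * `|b x| <= (1 - l) * d by rewrite ler_wpM2l ?subr_ge0 // ltW.
lra.
Qed.

Lemma wstar_separation (C : set (X -> R)) (w : X -> R) :
  wstar_closed C -> convex_fset C -> C !=set0 -> is_dual w -> ~ C w ->
  exists h : X, exists2 k : R, 0 < k & forall c, C c -> c h + k <= w h.
Proof.
move=> [Cd Ccl] cvxC [c0 Cc0] dw nCw.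
have [xs [d d0 sep]] := pointwise_basic_sep (fun cl => nCw (Ccl w (conj cl dw))).
(* [C'] is [C - w + box] translated to contain 0; it misses [-z0]. *)
pose z0 := c0 - w.
pose C' := [set v | exists c e, [/\ C c, box xs d e & v = c - w + e - z0]].
have inC' e : box xs d e -> C' e.
  by move=> Ee; exists c0, e; split => //; rewrite /z0 addrAC subrr add0r.
have C'cvx : cvx C'.
  move=> a b l [ca [ea [Ca Ea ->]]] [cb [eb [Cb Eb ->]]] l01.
  exists (fun y => l * ca y + (1 - l) * cb y), (l *: ea + (1 - l) *: eb).
  split; [exact: cvxC|exact: box_cvx|apply/funext => y; rewrite /z0].
  change (l * (ca y - w y + ea y - (c0 y - w y)) +
          (1 - l) * (cb y - w y + eb y - (c0 y - w y)) =
    l * ca y + (1 - l) * cb y - w y + (l * ea y + (1 - l) * eb y) - (c0 y - w y)).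
  ring.
have C'abs y : exists2 k : R, 0 < k & C' (k *: y).
  by have [k k0 Ek] := box_absorbing xs d0 y; exists k => //; exact: inC'.
have nC'z0 : ~ C' (- z0).
  move=> [c [e [Cc Ee eq]]]; move: (sep c Cc) => /negP; apply.
  have eq0 : c - w + e = 0 by apply: (addIr (- z0)); rewrite add0r.
  apply/allP => x xin; have := allP Ee x xin.
  have : c x - w x + e x = 0 by exact: (congr1 (fun f => f x) eq0).
  by move=> h /=; rewrite (_ : e x = - (c x - w x)) ?normrN //; lra.
have [phi [lin phiz le1]] := gauge_separation C'cvx C'abs nC'z0.
(* [C'] contains every multiple of a function vanishing on [xs], so [phi]
   kills such functions and is thus an evaluation on X^*. *)
have van v : (forall x, x \in xs -> v x = 0) -> phi v = 0.
  move=> vx; have lek k : k * phi v <= 1.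
    rewrite -(linear_mapZ lin); apply: le1; apply: inC'; apply/allP => x xin.
    by change (`|k * v x| < d); rewrite vx // mulr0 normr0.
  apply/eqP; apply: contraT => ne; have := lek (2 / phi v).
  by rewrite divfK //; lra.
have [h Hh] := finite_support_eval lin van.
have [k k0 Ek] := box_absorbing xs d0 (- z0).
exists h, k => // c Cc.
have : C' (c - w + k *: - z0 - z0) by exists c, (k *: - z0); split.
have phiz0 : phi z0 = -1 by rewrite -[z0]opprK (linear_mapN lin) phiz.
move/le1; rewrite (linear_mapB lin) (linear_mapD lin) (linear_mapB lin).
rewrite (linear_mapZ lin) phiz phiz0.
rewrite -(Hh c (Cd c Cc)) -(Hh w dw); lra.
Qed.

End WeakStarSeparation.

Section TVSFacts.
Context (R : realType) (Y : tvsType R).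

Lemma nbhs0_absorbing (U : set Y) : nbhs 0 U ->
  forall y, exists2 k : R, 0 < k & U (k *: y).
Proof.
move=> U0 y.
have cv : (fun k : R^o => k *: y) @ (nbhs (0 : R^o)) --> (0 : Y).
  rewrite -(scale0r y).
  apply: (cvg_comp2 (@cvg_id _ (nbhs (0:R^o))) (cvg_cst y)).
  exact: (@scale_continuous R Y (0, y)).
have /nbhs_ballP [e e0 sub] := cv U U0.
exists (e / 2); first by rewrite divr_gt0.
apply: (sub (e / 2)); rewrite /ball /= sub0r normrN gtr0_norm ?divr_gt0 //.
by rewrite ltr_pdivrMr // ltr_pMr // ltr1n.
Qed.

Lemma nbhs0_cvx_sym (M : set Y) : nbhs 0 M ->
  exists U : set Y, [/\ nbhs 0 U, U `<=` M, cvx U & forall y, U y -> U (- y)].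
Proof.
move=> M0; have [B Bc [Bop Bnb]] := @locally_convex R Y.
have [U [BU U0] UM] := Bnb 0 M M0.
have nU : nbhs 0 U by apply: open_nbhs_nbhs; split => //; exact: Bop.
have cU : cvx U.
  move=> a b l Ua Ub /andP[l0 l1].
  have cUc : convex_set (U : set (convex_lmodType Y)) by apply: Bc; exact: mem_set.
  by have /set_mem := cUc a b (Itv01 l0 l1) (mem_set Ua) (mem_set Ub).
exists (U `&` (-%R @` U)); split.
- by apply: filterI => //; exact: nbhs0N.
- by move=> y [/UM].
- move=> a b l [Ua [a' Ua' ea]] [Ub [b' Ub' eb]] l01; split; first exact: cU.
  exists (l *: a' + (1 - l) *: b'); first exact: cU.
  by rewrite -ea -eb opprD -!scalerN.
- by move=> y [Uy [y' Uy' e]]; split; [rewrite -e opprK|exists y].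
Qed.

Lemma bounded_linear_continuous (u : Y -> R) (N : set Y) (B : R) :
  linear_map u -> nbhs 0 N -> (forall w, N w -> `|u w| <= B) -> continuous u.
Proof.
move=> lu N0 bd y.
have B0 : 0 <= B by apply: le_trans (bd 0 (nbhs_singleton N0)).
apply/cvgrPdist_lt => e e0.
have k0 : e / (2 * (B + 1)) != 0 by rewrite mulf_neq0 ?invr_eq0 ?gt_eqF //; lra.
apply: filterS (nbhsT y (nbhs0Z k0 N0)) => t [t' [n Nn <-] <-].
rewrite (linear_mapD lu) (linear_mapZ lu) opprD addrA subrr add0r normrN normrM.
rewrite ger0_norm ?divr_ge0 ?(ltW e0) //; last by lra.
apply: le_lt_trans (ler_wpM2l _ (bd _ Nn)) _.
  by rewrite divr_ge0 ?(ltW e0) //; lra.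
rewrite mulrAC ltr_pdivrMr; last by lra.
have : 0 < e * B + e by nra.
nra.
Qed.

Lemma affine_path_cont (x h : Y) (s0 : R) :
  (fun s : R^o => x + s *: h) @ s0 --> x + s0 *: h.
Proof.
have sc : (fun s : R^o => s *: h) @ s0 --> s0 *: h.
  apply: (cvg_comp2 (G := nbhs (s0 : R^o)) (H := nbhs h) (f := id)
    (g := fun _ => h) (h := fun a b => a *: b)).
  - exact: cvg_id.
  - exact: cvg_cst.
  - exact: (@scale_continuous R Y (s0, h)).
apply: (cvg_comp2 (G := nbhs x) (H := nbhs (s0 *: h)) (f := fun _ => x)
  (g := fun s : R^o => s *: h) (h := fun a b => a + b)).
- exact: cvg_cst.
- exact: sc.
- exact: (@add_continuous Y (x, s0 *: h)).
Qed.

End TVSFacts.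

Lemma ereal_between (R : realType) (a : R) (v : \bar R) : (a%:E < v)%E ->
  exists b, a < b /\ (b%:E < v)%E.
Proof.
case: v => [r| |] //= h.
- rewrite lte_fin in h; exists ((a + r) / 2); split; first lra.
  by rewrite lte_fin; lra.
- by exists (a + 1); split; [lra|exact: ltry].
Qed.

Lemma affine_perturb (R : realFieldType) (c K b s s0 t del : R) :
  del * (2 * (`|K| + 1)) = b - (c + s0 * K) -> `|s - s0| < del ->
  `|t| < (b - (c + s0 * K)) / 2 -> c + s * K + t < b.
Proof.
move=> delK h3 h4.
have e1 : (s - s0) * K <= `|s - s0| * `|K| by rewrite -normrM ler_norm.
have e2 : `|s - s0| * `|K| <= del * `|K| by rewrite ler_wpM2r // ltW.
have e3 : t <= `|t| by rewrite ler_norm.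
have e5 : del * (2 * (`|K| + 1)) = 2 * (del * `|K|) + 2 * del by ring.
have e6 : s * K = s0 * K + (s - s0) * K by ring.
have := normr_ge0 (s - s0); have := normr_ge0 K; lra.
Qed.

Section SegmentMinorant.
Context (R : realType) (X : tvsType R).

(* By compactness of [0, 1], a strict affine minorant of a lsc [g] along a
   segment stays strict under small perturbations of point and value. *)
Lemma uniform_near (g : X -> \bar R) (x h : X) (c K : R) :
  lower_semicontinuous g ->
  (forall s, 0 <= s <= 1 -> ((c + s * K)%:E < g (x + s *: h)%R)%E) ->
  \forall i \near (0 : X * R^o), forall s, 0 <= s <= 1 ->
     ((c + s * K + i.2)%:E < g (x + s *: h + i.1)%R)%E.
Proof.
move=> lsc hyp.
have := (@compact_near_coveringP R `[(0:R), 1]%classic).1 (@segment_compact R 0 1).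
move=> /(_ (X * R^o)%type (nbhs (0 : X * R^o))
  (fun i s => ((c + s * K + i.2)%:E < g (x + s *: h + i.1)%R)%E) _); apply.
move=> s0; rewrite /= in_itv /= => /andP[s00 s01].
have [b [ab bg]] := ereal_between (hyp s0 (introT andP (conj s00 s01))).
have [N nN Nb] := lsc _ _ bg.
have nN' : nbhs (x + s0 *: h + 0) N by rewrite addr0.
have [[N1 N2] /= [nN1 nN2] sub] := @add_continuous X (x + s0 *: h, 0) N nN'.
set gam := b - (c + s0 * K).
have gam0 : 0 < gam by rewrite subr_gt0.
set del := gam / (2 * (`|K| + 1)).
have del0 : 0 < del by rewrite divr_gt0 //; rewrite mulr_gt0 //; lra.
have delK : del * (2 * (`|K| + 1)) = gam by rewrite /del divfK //; rewrite gt_eqF //; lra.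
near=> s i.
have h1 : N1 (x + s *: h) by near: s; exact (@affine_path_cont R X x h s0 N1 nN1).
have h2 : N2 i.1.
  near: i; exists (N2, [set: R^o]) => /=; first by split => //; exact: filterT.
  by move=> [w t] [].
have h3 : `|s - s0| < del.
  by near: s; apply/nbhs_ballP; exists del => // t; rewrite /ball /= distrC.
have h4 : `|i.2| < gam / 2.
  near: i; exists ([set: X], [set t : R^o | `|t| < gam / 2]) => /=.
    split; first exact: filterT.
    apply/nbhs_ballP; exists (gam / 2); first by rewrite /=; have := gam0; lra.
    by move=> t; rewrite /ball /= sub0r normrN.
  by move=> [w t] [].
have gN : N (x + s *: h + i.1) by exact: (sub (_, _) (conj h1 h2)).
by apply: lt_trans (Nb _ gN); rewrite lte_fin; exact: affine_perturb delK h3 h4.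
Unshelve. all: by end_near.
Qed.

Lemma fin_of_le (g : X -> \bar R) y (r : R) : g y != -oo%E -> (g y <= r%:E)%E ->
  exists f, g y = f%:E /\ f <= r.
Proof. by case: (g y) => [f| |] //= _; rewrite lee_fin => fr; exists f. Qed.

Lemma epigraph_cvx (g : X -> \bar R) : (forall z, g z != -oo%E) -> convex_fun g ->
  cvx [set q : (X * R^o)%type | (g q.1 <= q.2%:E)%E].
Proof.
move=> ninf cg [a ra] [b rb] l /= Da Db /andP[l0 l1].
have [->|ln0] := eqVneq l 0.
  by rewrite !(scale0r, scale1r, add0r, addr0, subr0, subrr).
have [->|ln1] := eqVneq l 1.
  by rewrite !(scale0r, scale1r, add0r, addr0, subr0, subrr).
have lp : 0 < l < 1 by rewrite !lt_neqAle eq_sym ln0 ln1 l0 l1.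
have [fa [ga fra]] := fin_of_le (ninf a) Da.
have [fb [gb frb]] := fin_of_le (ninf b) Db.
apply: le_trans (cg a b l lp) _; rewrite ga gb -!EFinM -EFinD lee_fin.
rewrite /GRing.scale /=.
have : l * fa <= l * ra by rewrite ler_wpM2l.
have : (1 - l) * fb <= (1 - l) * rb by rewrite ler_wpM2l // subr_ge0.
lra.
Qed.

Lemma linear_map_pair (phi : (X * R^o)%type -> R) w r : linear_map phi ->
  phi (w, r) = phi (w, 0) + r * phi (0, 1).
Proof.
move=> lin; have -> : (w, r) = (w, 0) + r *: ((0 : X), (1 : R^o)).
  by congr (_, _); rewrite /= ?scaler0 ?addr0 //; change (r = 0 + r * 1); ring.
by rewrite (linear_mapD lin) (linear_mapZ lin).
Qed.

Section WithNeighbourhood.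
Variables (g : X -> \bar R) (x h : X) (gx K eps : R) (U : set (X * R^o)).
Hypotheses (g_ninf : forall z, g z != -oo%E) (g_cvx : convex_fun g)
  (gxE : g x = gx%:E) (eps0 : 0 < eps)
  (U0 : nbhs (0 : X * R^o) U) (Ucvx : cvx U) (Usym : forall e, U e -> U (- e))
  (U_below : forall e, U e -> forall s, 0 <= s <= 1 ->
     ((gx - eps + s * K + e.2)%:E < g (x + s *: h + e.1)%R)%E).

Let epi := [set q : (X * R^o)%type | (g q.1 <= q.2%:E)%E].
Let seg (s : R) : (X * R^o)%type := (x + s *: h, gx - eps + s * K).
Let z0 : (X * R^o)%type := (0, eps).
(* epi - seg[0,1] + U, translated so as to contain 0 and miss [- z0]. *)
Let C' := [set v : (X * R^o)%type | exists q s e,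
  [/\ epi q, 0 <= s <= 1, U e & v = q - seg s + e - z0]].

Let seg_affine l s1 s2 : l *: seg s1 + (1 - l) *: seg s2 = seg (l * s1 + (1 - l) * s2).
Proof.
rewrite /seg; congr (_, _).
  by rewrite /= !scalerDr addrACA -scalerDl subrKC scale1r !scalerA -scalerDl.
rewrite /=; change (l * (gx - eps + s1 * K) + (1 - l) * (gx - eps + s2 * K) =
  gx - eps + (l * s1 + (1 - l) * s2) * K); ring.
Qed.

Let C'_cvx : cvx C'.
Proof.
move=> v1 v2 l [q1 [s1 [e1 [Dq1 s1i Ue1 ->]]]] [q2 [s2 [e2 [Dq2 s2i Ue2 ->]]]] l01.
exists (l *: q1 + (1 - l) *: q2), (l * s1 + (1 - l) * s2), (l *: e1 + (1 - l) *: e2).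
split; [exact: epigraph_cvx| |exact: Ucvx|].
  move: l01 s1i s2i => /andP[l0 l1] /andP[a0 a1] /andP[b0 b1].
  apply/andP; split; first nra.
  have : l * s1 <= l by nra.
  have : (1 - l) * s2 <= 1 - l by nra.
  lra.
rewrite -seg_affine !scalerDr !scalerN addrACA -opprD -scalerDl subrKC scale1r.
congr (_ - _); rewrite addrACA; congr (_ + _).
by rewrite addrACA opprD.
Qed.

Let in_C' e : U e -> C' e.
Proof.
move=> Ue; exists (x, gx), 0, e; split => //; first by rewrite /epi /= gxE.
  by rewrite lexx ler01.
have -> : (x, gx) - seg 0 = z0.
  rewrite /seg /z0; congr (_, _); first by rewrite /= scale0r addr0 subrr.
  by rewrite /=; ring.
by rewrite addrAC subrr add0r.
Qed.

Let C'_miss : ~ C' (- z0).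
Proof.
move=> [q [s [e [Dq s01 Ue eq]]]].
have e0 : q - seg s + e = 0 by apply: (addIr (- z0)); rewrite add0r -eq.
have qe : q = seg s - e by apply/eqP; rewrite -subr_eq0 opprB addrA addrAC e0.
have := U_below (Usym Ue) s01; rewrite /= -/(seg s).
by move: Dq; rewrite /epi qe /= => Dq /lt_le_trans /(_ Dq); rewrite ltxx.
Qed.

(* Gauge separation of [- z0] from [C'] gives [phi] on X * R with
   [phi (0, 1) = -1 / eps]; its X-component, scaled by [eps], is the
   sought functional, continuous as it is bounded on [U]. *)
Lemma segment_minorant_nbhs : exists u, is_dual u /\ forall y s, 0 <= s <= 1 ->
  ((gx - eps + s * K + u (y - (x + s *: h)))%:E <= g y)%E.
Proof.
have C'abs y : exists2 k : R, 0 < k & C' (k *: y).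
  by have [k k0 Uk] := nbhs0_absorbing U0 y; exists k => //; exact: in_C'.
have [phi [lin phiz le1]] := gauge_separation C'_cvx C'abs C'_miss.
pose a w := phi (w, 0).
have be1 : eps * phi (0, 1) = -1.
  have phi00 : phi (0, 0) = 0 := linear_map0 lin.
  by move: phiz; rewrite (linear_mapN lin) /z0 linear_map_pair // phi00 add0r; lra.
pose u y := eps * a y.
have lu : linear_map u.
  move=> k v w; have e : ((k *: v + w, 0) : X * R^o) = k *: (v, 0) + (w, 0).
    by congr (_, _); rewrite /= scaler0 addr0.
  by rewrite /u /a e (linear_mapD lin) (linear_mapZ lin); ring.
(* [phi <= 1] at [(y, r) - seg s - z0] is the minorant inequality. *)
have main y r s : epi (y, r) -> 0 <= s <= 1 ->
    u (y - (x + s *: h)) + (gx - eps + s * K) <= r.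
  move=> Dyr s01.
  have := le1 _ (ex_intro _ (y, r) (ex_intro _ s (ex_intro _ 0
     (And4 Dyr s01 (nbhs_singleton U0) erefl)))).
  rewrite /seg /z0 /= linear_map_pair // !subr0 !addr0 => hle.
  have : eps * (a (y - (x + s *: h)) + (r - (gx - eps + s * K) - eps) * phi (0, 1))
     <= eps * 1 by rewrite ler_pM2l.
  rewrite mulrDr mulrCA be1 /u; lra.
have Ucont : nbhs (0 : X) [set w | U (w, 0)].
  move: U0 => [[A1 A2] /= [nA1 nA2] sub].
  by apply: filterS nA1 => w A1w; apply: (sub (w, 0)); split => //; exact: nbhs_singleton.
have du : is_dual u.
  split => //; apply: (bounded_linear_continuous lu Ucont (B := eps)) => w Uw.
  have h1 : a w <= 1 by apply: le1; exact: in_C'.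
  have h2 : - a w <= 1.
    have := le1 _ (in_C' (Usym Uw)).
    by rewrite -[- (w, 0)]scaleN1r (linear_mapZ lin) mulN1r.
  rewrite /u normrM gtr0_norm // -[X in _ <= X]mulr1 ler_pM2l //.
  by rewrite ler_norml; apply/andP; split; lra.
exists u; split => // y s s01.
case gyE : (g y) => [r| |]; last by move: (g_ninf y); rewrite gyE.
  by rewrite lee_fin; have := main y r s; rewrite /epi /= gyE lexx => /(_ isT s01); lra.
exact: leey.
Qed.

End WithNeighbourhood.

Lemma segment_minorant (g : X -> \bar R) (x h : X) (gx K eps : R) :
  (forall z, g z != -oo%E) -> convex_fun g -> lower_semicontinuous g ->
  g x = gx%:E -> 0 < eps ->
  (forall s, 0 <= s <= 1 -> ((gx - eps + s * K)%:E < g (x + s *: h)%R)%E) ->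
  exists u, is_dual u /\ forall y s, 0 <= s <= 1 ->
     ((gx - eps + s * K + u (y - (x + s *: h)))%:E <= g y)%E.
Proof.
move=> ninf cvxg lsc gxE eps0 below.
have [U [U0 UM Ucvx Usym]] := nbhs0_cvx_sym (uniform_near lsc below).
exact: (segment_minorant_nbhs ninf cvxg gxE eps0 U0 Ucvx Usym UM).
Qed.

End SegmentMinorant.

Lemma compact_lsc_bounded_below (R : realType) (T : topologicalType)
  (phi : T -> \bar R) : compact [set: T] -> lower_semicontinuous phi ->
  (forall t, phi t \is a fin_num) -> (-oo < ereal_inf (range phi))%E.
Proof.
move=> cT lsc finphi.
have := (@compact_near_coveringP T [set: T]).1 cT.
move=> /(_ R (pinfty_nbhs R) (fun M t => ((- M)%:E < phi t)%E)) cover.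
have [M0 [_ HM]] : \forall M \near pinfty_nbhs R, forall t, [set: T] t ->
    ((- M)%:E < phi t)%E.
  apply: cover => t1 _; have : ((fine (phi t1) - 1)%:E < phi t1)%E.
    by rewrite -[X in (_ < X)%E](fineK (finphi t1)) lte_fin; lra.
  move=> /lsc [V nV HV].
  exists (V, [set M | 1 - fine (phi t1) < M]) => /=.
    by split => //; exists (1 - fine (phi t1)); split; [exact: num_real|].
  by move=> [t M] /= [Vt lt]; apply: lt_trans (HV _ Vt); rewrite lte_fin; lra.
have hM := HM (M0 + 1) (ltr_pwDr ltr01 (lexx M0)).
apply: (@lt_le_trans _ _ (- (M0 + 1))%:E); first exact: ltNye.
by apply/ereal_infP => _ [t _ <-]; apply: ltW; exact: hM.
Qed.

Section DualFacts.
Context (R : realType) (X : tvsType R).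

Lemma dual_comb (u v : X -> R) (a b : R) : is_dual u -> is_dual v ->
  is_dual (fun z => a * u z + b * v z).
Proof.
move=> du dv; split; first by move=> k y1 y2; rewrite du.1 dv.1; ring.
move=> z; apply: cvgD; apply: cvgM;
  [exact: cvg_cst|exact: du.2|exact: cvg_cst|exact: dv.2].
Qed.

Definition dual_halfspace (p : X) (b : R) := [set v : X -> R | is_dual v /\ v p <= b].

Lemma dual_halfspace_convex p b : convex_fset (dual_halfspace p b).
Proof.
move=> u v l [du hu] [dv hv] /andP[l0 l1]; split; first exact: dual_comb.
have : l * u p <= l * b by rewrite ler_wpM2l.
have : (1 - l) * v p <= (1 - l) * b by rewrite ler_wpM2l // subr_ge0.
lra.
Qed.

Lemma dual_halfspace_closed p b : wstar_closed (dual_halfspace p b).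
Proof.
split; first by move=> v [].
move=> v [clv dv]; split => //; rewrite leNgt; apply/negP => gt.
have ev : (fun g : X -> R => g p) @ (nbhs (v : {ptws X -> R})) --> v p.
  have := (@pointwise_cvgP X R (nbhs (v : {ptws X -> R})) v _).1 (@cvg_id _ _) p.
  by apply; apply: typeclass_instances.
have nW : nbhs (v p) [set r : R | b < r].
  apply/nbhs_ballP; exists (v p - b); first by rewrite /= subr_gt0.
  by move=> r; rewrite /ball /= => hr; have := ler_norm (v p - r); lra.
have [g [[_ Hg] Wg]] := clv _ (ev _ nW).
by move: Wg; rewrite /= ltNge Hg.
Qed.

Lemma minorant_eps_subdiff (g : X -> \bar R) x (gx eps : R) (u : X -> R) :
  is_dual u -> g x = gx%:E ->
  (forall y, ((gx - eps + u (y - x))%:E <= g y)%E) -> eps_subdiff eps g x u.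
Proof.
move=> du gxE min; split => //; split; first by rewrite gxE.
move=> y; apply: le_trans (min y); rewrite gxE.
by rewrite -[X in (X <= _)%E]/((gx + u (y - x) - eps)%:E) lee_fin; lra.
Qed.

(* Proper convex lsc functions have [eps]-subgradients at points of their
   domain: take the trivial segment in [segment_minorant]. *)
Lemma eps_subdiff_neq0 (g : X -> \bar R) (x : X) (eps : R) : (forall z, g z != -oo%E) ->
  convex_fun g -> lower_semicontinuous g -> g x \is a fin_num -> 0 < eps ->
  eps_subdiff eps g x !=set0.
Proof.
move=> ninf cvxg lsc finx eps0; have gxE := esym (fineK finx).
have below s : 0 <= s <= 1 ->
    ((fine (g x) - eps + s * 0)%:E < g (x + s *: (0 : X))%R)%E.
  by move=> _; rewrite scaler0 addr0 mulr0 addr0 gxE lte_fin; lra.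
have [u [du Hu]] := segment_minorant ninf cvxg lsc gxE eps0 below.
exists u; apply: minorant_eps_subdiff du gxE _ => y.
by have := Hu y 0; rewrite lexx ler01 mul0r addr0 scale0r addr0; apply.
Qed.

End DualFacts.

Lemma convex_segment_le (R : realType) (X : tvsType R) (g : X -> \bar R)
    (x h : X) (gx v s sg : R) :
  (forall z, g z != -oo%E) -> convex_fun g -> g x = gx%:E ->
  (g (x + s *: h)%R <= v%:E)%E -> 0 < sg <= s ->
  (g (x + sg *: h)%R <= (gx + sg / s * (v - gx))%:E)%E.
Proof.
move=> ninf cvxg gxE gv /andP[sg0 sgs].
have s0 : 0 < s by exact: lt_le_trans sgs.
have [->|ne] := eqVneq sg s.
  by rewrite divff ?gt_eqF // mul1r [gx + _]addrC subrK.
set lam := sg / s.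
have lam01 : 0 < lam < 1.
  by rewrite divr_gt0 //= ltr_pdivrMr // mul1r lt_neqAle ne sgs.
have vecE : lam *: (x + s *: h) + (1 - lam) *: x = x + sg *: h.
  by rewrite scalerDr scalerA divfK ?gt_eqF // addrAC -scalerDl subrKC scale1r.
have [w [wE wv]] := fin_of_le (ninf _) gv.
have := cvxg (x + s *: h) x lam lam01; rewrite vecE wE gxE => cv.
apply: le_trans cv _; rewrite -!EFinM -EFinD lee_fin.
have : lam * w <= lam * v by rewrite ler_wpM2l // ltW; case/andP: lam01.
lra.
Qed.

Section Corollary.
Context (R : realType) (X : tvsType R) (T : topologicalType)
  (F : T -> X -> \bar R) (x : X).
Hypothesis Fp : forall t,
  proper_fun (F t) /\ convex_fun (F t) /\ lower_semicontinuous (F t).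
Let f := fun z => ereal_sup (range (fun t => F t z)).
Hypotheses (domx : edom f x) (cT : compact [set: T])
  (usc : forall z, upper_semicontinuous (fun t => F t z))
  (lscx : lower_semicontinuous (fun t => F t x)).
Variable t0 : T.

Let ninf t z : F t z != -oo%E.
Proof. by have [[]] := Fp t. Qed.

Let Fle t z : (F t z <= f z)%E.
Proof. by apply: ereal_sup_ubound; exists t. Qed.

Let finF t : F t x \is a fin_num.
Proof. by rewrite fin_numE ninf (lt_eqF (le_lt_trans (Fle t x) domx)). Qed.

Let FxE t : F t x = (fine (F t x))%:E.
Proof. by rewrite fineK. Qed.

Let fin_dom y : edom f y -> f y \is a fin_num.
Proof.
move=> dy; have fy_gt : (-oo < f y)%E.
  by apply: lt_le_trans (Fle t0 y); rewrite ltNye.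
by rewrite fin_numE (gt_eqF fy_gt) (lt_eqF dy).
Qed.

Lemma inf_gt_ninfty : (-oo < ereal_inf (range (fun t => F t x)))%E.
Proof. exact: compact_lsc_bounded_below cT lscx finF. Qed.

Let m := fine (ereal_inf (range (fun t => F t x))).

Let inf_le t : (ereal_inf (range (fun t => F t x)) <= F t x)%E.
Proof. by apply: ereal_inf_lbound; exists t. Qed.

Let mle t : m <= fine (F t x).
Proof.
apply: fine_le; rewrite ?inE ?finF ?inf_le //.
have inf_lt : (ereal_inf (range (fun t => F t x)) < +oo)%E.
  exact: le_lt_trans (inf_le t) (le_lt_trans (Fle t x) domx).
by rewrite fin_numE (gt_eqF inf_gt_ninfty) (lt_eqF inf_lt).
Qed.

Let A (eps : R) := \bigcup_(t in [set: T]) eps_subdiff eps (F t) x.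

Lemma clco_bound (eps : R) c y (fy : R) : wstar_clco (A eps) c -> f y = fy%:E ->
  c (y - x) <= fy - m + eps.
Proof.
move=> Cc fyE; have [] // := Cc (dual_halfspace (y - x) (fy - m + eps)).
split; last by split; [exact: dual_halfspace_convex|exact: dual_halfspace_closed].
move=> a [t _ [da [finx ineq]]]; split => //.
have := le_trans (ineq y) (Fle t y); rewrite fyE FxE.
rewrite -[X in (X <= _)%E]/((fine (F t x) + a (y - x) - eps)%:E) lee_fin.
by have := mle t; lra.
Qed.

Lemma rec_cone_sub_normal (eps : R) : 0 < eps ->
  rec_cone (wstar_clco (A eps)) `<=` normal_cone (edom f) x.
Proof.
move=> eps0 u [du Hu]; split => // y domy.
have [a Aa] : A eps !=set0.
  have [_ [cvx lsc]] := Fp t0.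
  have [a Ea] := eps_subdiff_neq0 (ninf t0) cvx lsc (finF t0) eps0.
  by exists a, t0.
have clA : wstar_clco (A eps) a by move=> C [AsubC _]; exact: AsubC.
have fyE := esym (fineK (fin_dom domy)); set fy := fine (f y) in fyE.
rewrite leNgt; apply/negP => up.
pose B := fy - m + eps - a (y - x).
pose l := (`|B| + 1) / u (y - x).
have l0 : 0 <= l by rewrite divr_ge0 // ?ltW // addr_ge0.
have := clco_bound (Hu a l clA l0) fyE; rewrite /=.
have -> : l * u (y - x) = `|B| + 1 by rewrite /l divfK // gt_eqF.
by have := ler_norm B; rewrite /B; lra.
Qed.

(* Key step: if the [eps]-subgradients are bounded above at [h] by [M],
   then each [f_t] decreases by [eps] along [h] relative to the slope
   [M + eps + 1]: otherwise [segment_minorant] yields an [eps]-subgradient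
   exceeding [M] at [h]. *)
Lemma descent_step (eps M : R) (h : X) : 0 < eps -> (forall a, A eps a -> a h <= M) ->
  forall t, exists2 s, 0 < s <= 1 &
    (F t (x + s *: h)%R <= (fine (F t x) - eps + s * (M + eps + 1))%:E)%E.
Proof.
move=> eps0 Abnd t; set gx := fine (F t x); have gxE : F t x = gx%:E := FxE t.
apply: contrapT => ns.
have below s : 0 <= s <= 1 ->
    ((gx - eps + s * (M + eps + 1))%:E < F t (x + s *: h)%R)%E.
  move=> /andP[s0 s1]; have [->|sn0] := eqVneq s 0.
    by rewrite scale0r addr0 mul0r addr0 gxE lte_fin; lra.
  rewrite ltNge; apply/negP => le; apply: ns; exists s => //.
  by rewrite s1 andbT lt_neqAle eq_sym sn0.
have [_ [cvx lsc]] := Fp t.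
have [u [du Hu]] := segment_minorant (ninf t) cvx lsc gxE eps0 below.
have Au : A eps u.
  exists t => //; apply: minorant_eps_subdiff du gxE _ => y.
  by have := Hu y 0; rewrite lexx ler01 mul0r addr0 scale0r addr0; apply.
have := Abnd _ Au; have := Hu x 1; rewrite ler01 lexx => /(_ isT).
rewrite gxE lee_fin scale1r opprD addrA subrr add0r (linear_mapN du.1) mul1r.
lra.
Qed.

(* By compactness of [T], upper semicontinuity of [t |-> f_t (x + s h)] and
   lower semicontinuity of [t |-> f_t x], the descent step can be taken
   uniformly away from 0. *)
Lemma uniform_descent (eps M : R) (h : X) : 0 < eps -> (forall a, A eps a -> a h <= M) ->
  exists2 sg : R, 0 < sg & forall t, exists2 s, sg <= s <= 1 &
    (F t (x + s *: h)%R < (fine (F t x) - eps / 2 + s * (M + eps + 1))%:E)%E.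
Proof.
move=> eps0 Abnd; pose P sg t := exists2 s, sg <= s <= 1 &
  (F t (x + s *: h)%R < (fine (F t x) - eps / 2 + s * (M + eps + 1))%:E)%E.
have local t1 : [set: T] t1 -> \forall t \near t1 & sg \near (0^'+)%classic, P sg t.
  move=> _; have [s1 /andP[s10 s11] Hs1] := descent_step eps0 Abnd t1.
  set g1 := fine (F t1 x) in Hs1.
  have g1E : F t1 x = g1%:E := FxE t1.
  have : (F t1 (x + s1 *: h)%R < (g1 - 3 * eps / 4 + s1 * (M + eps + 1))%:E)%E.
    by apply: le_lt_trans Hs1 _; rewrite lte_fin; lra.
  move=> /usc [V1 nV1 HV1].
  have : ((g1 - eps / 4)%:E < F t1 x)%E by rewrite g1E lte_fin; lra.
  move=> /lscx [V2 nV2 HV2].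
  exists (V1 `&` V2, [set sg | sg <= s1]) => /=.
    by split; [exact: filterI|exact: nbhs_right_le].
  move=> [t sg] /= [[V1t V2t] sgs]; exists s1; first by rewrite sgs s11.
  apply: lt_le_trans (HV1 _ V1t) _; rewrite lee_fin.
  by have := HV2 _ V2t; rewrite [X in (_ < X)%E]FxE lte_fin; lra.
have near_all : \forall sg \near (0^'+)%classic, [set: T] `<=` P sg.
  exact: (@compact_near_coveringP T [set: T]).1 cT R (0^'+)%classic P _ local.
have [sg [sg0 Hsg]] := filter_ex (filterI (nbhs_right_gt (0 : R)) near_all).
by exists sg => // t; exact: Hsg t I.
Qed.

Lemma descent_dom (eps M : R) (h : X) : 0 < eps -> (forall a, A eps a -> a h <= M) ->
  exists2 sg : R, 0 < sg & edom f (x + sg *: h).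
Proof.
move=> eps0 Abnd; have [sg sg0 Hsg] := uniform_descent eps0 Abnd.
exists sg => //; rewrite /edom /=.
apply: le_lt_trans (ltry (fine (f x) + sg * (M + eps + 1))).
apply: ge_ereal_sup => _ [t _ <-].
have [s /andP[sgs s1] lt] := Hsg t.
set gt := fine (F t x) in lt; have gtE : F t x = gt%:E := FxE t.
have gtf : gt <= fine (f x).
  by rewrite -lee_fin -gtE (fineK (fin_dom domx)).
have sg_s : 0 < sg <= s by rewrite sg0.
have s0 : 0 < s by exact: lt_le_trans sgs.
apply: le_trans (convex_segment_le (ninf t) (Fp t).2.1 gtE (ltW lt) sg_s) _.
rewrite lee_fin; set lam := sg / s.
have lam0 : 0 <= lam by rewrite divr_ge0 // ltW.
have -> : gt + lam * (gt - eps / 2 + s * (M + eps + 1) - gt) =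
    gt - lam * (eps / 2) + (lam * s) * (M + eps + 1) by ring.
have -> : lam * s = sg by rewrite /lam divfK ?gt_eqF.
have : 0 <= lam * (eps / 2) by rewrite mulr_ge0 // ltW // divr_gt0.
lra.
Qed.

(* Conversely, a normal vector [u] is a recession direction: if [c + l u]
   escaped a weak^*-closed convex [C] containing the [eps]-subgradients,
   weak^* separation would give a point [h] with [u h > 0] at which the
   [eps]-subgradients are bounded, contradicting [descent_dom]. *)
Lemma normal_sub_rec_cone (eps : R) : 0 < eps ->
  normal_cone (edom f) x `<=` rec_cone (wstar_clco (A eps)).
Proof.
move=> eps0 u [du Hn]; split => // c l Cc l0 C [AsubC [cvxC clC]].
have cC : C c := Cc C (conj AsubC (conj cvxC clC)).
apply: contrapT => nCw.
have dw : is_dual (fun z => c z + l * u z).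
  have -> : (fun z => c z + l * u z) = (fun z => 1 * c z + l * u z).
    by apply/funext => z; rewrite mul1r.
  exact: dual_comb (clC.1 c cC) du.
have [h [k k0 sep]] := wstar_separation clC cvxC (ex_intro _ c cC) dw nCw.
have uh : 0 < u h.
  rewrite ltNge; apply/negP => uh0; have := sep c cC.
  have : l * u h <= 0 by rewrite mulr_ge0_le0.
  lra.
have Abnd a : A eps a -> a h <= c h + l * u h - k.
  by move=> Aa; have := sep a (AsubC a Aa); lra.
have [sg sg0 dom] := descent_dom eps0 Abnd.
have := Hn _ dom; rewrite addrAC subrr add0r (linear_mapZ du.1).
by have := mulr_gt0 sg0 uh; lra.
Qed.

End Corollary.

Theorem corollary3 (R : realType) (X : tvsType R) (T : topologicalType)
  (F : T -> X -> \bar R) (x : X) :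
  hausdorff_space X ->
  [set: T] !=set0 ->
  (forall t, proper_fun (F t) /\ convex_fun (F t) /\ lower_semicontinuous (F t)) ->
  let f := fun z => ereal_sup (range (fun t => F t z)) in
  edom f x ->
  (* (SH) *)
  compact [set: T] -> hausdorff_space T ->
  (forall z, upper_semicontinuous (fun t => F t z)) ->
  (* additional hypothesis *)
  lower_semicontinuous (fun t => F t x) ->
  (-oo < ereal_inf (range (fun t => F t x)))%E /\
  forall eps : R, 0 < eps ->
    normal_cone (edom f) x =
    rec_cone (wstar_clco (\bigcup_(t in [set: T]) eps_subdiff eps (F t) x)).
Proof.
move=> _ [t0 _] Fp f domx cT _ usc lscx.
split; first exact: inf_gt_ninfty Fp domx cT lscx.
move=> eps eps0; apply/seteqP; split.
  exact: (normal_sub_rec_cone Fp domx cT usc lscx t0 (eps := eps) eps0).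
exact: (rec_cone_sub_normal Fp domx cT lscx t0 (eps := eps) eps0).
Qed.
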